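(* Let $\Delta$ be a simplicial polytopal fan in $\mathbb{R}^d$ with ray generators $\mathbf{v}_1,\ldots,\mathbf{v}_n$, let $\mathbf{u}^{(1)},\ldots,\mathbf{u}^{(m)}\in\mathbb{R}^d$, $U=(\mathbf{u}^{(1)},\ldots,\mathbf{u}^{(m)})^\mathsf{T}$, let $\mathbf{h}_0\in\mathcal{P}(\Delta)$, $\mathbf{y}_0=A_U\mathbf{h}_0$, and $\mathbf{y}\in\mathbb{R}^m$. Let $\hat{\mathbf{y}}$ be the unique point of $A_U\mathcal{P}(\Delta)$ with minimal distance to $\mathbf{y}$, and $\bar{\mathbf{y}}$ the orthogonal projection of $\mathbf{y}$ onto the subspace $A_U\mathbb{R}^n$. Let $\bar{\mathbf{h}},\hat{\mathbf{h}}\in\mathbb{R}^n$ satisfy $A_U\bar{\mathbf{h}}=\bar{\mathbf{y}}$ and $A_U\hat{\mathbf{h}}=\hat{\mathbf{y}}$. Then \[ \|\hat{\mathbf{y}}-\mathbf{y}_0\|\le\|\bar{\mathbf{y}}-\mathbf{y}_0\|, \qquad \sqrt{\lambda_1(A_U^\mathsf{T}A_U)}\,\|\hat{\mathbf{h}}-\mathbf{h}_0\|\le\sqrt{\lambda_n(A_U^\mathsf{T}A_U)}\,\|\bar{\mathbf{h}}-\mathbf{h}_0\|. \]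
   Context: A fan is simplicial if every cone is generated by linearly independent vectors; polytopal if it is the normal fan of a polytope. The deformation cone $\mathcal{P}(\Delta)\subseteq\mathbb{R}^n$ is the closed polyhedral cone of support vectors $(h_P(\mathbf{v}_i))_i$ of polytopes $P$ whose normal fan is coarsened by $\Delta$, where $h_P(\mathbf{u})=\max_{\mathbf{x}\in P}\langle\mathbf{x},\mathbf{u}\rangle$. For $\mathbf{u}\in\mathbb{R}^d$, with $\sigma$ the cone of $\Delta$ containing $\mathbf{u}$ in its relative interior and $\mathbf{u}=\sum_{k\in I_\sigma}\lambda_k\mathbf{v}_k$ over the generators of $\sigma$, set $[\mathbf{u}]_i=\lambda_i$ for $i\in I_\sigma$ and $0$ otherwise; $A_U$ is the $m\times n$ matrix with rows $[\mathbf{u}^{(i)}]^\mathsf{T}$. For a symmetric matrix $A\in\mathbb{R}^{n\times n}$, $\lambda_1(A)\le\cdots\le\lambda_n(A)$ are its eigenvalues. *)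

From HB Require Import structures.
From mathcomp Require Import all_boot all_order all_algebra.
From mathcomp Require Import all_classical all_reals.
Set Implicit Arguments. Unset Strict Implicit. Unset Printing Implicit Defensive.
Import Order.TTheory GRing.Theory Num.Theory.
Local Open Scope ring_scope.
Local Open Scope classical_set_scope.

Section Defs.
Variable R : realType.

Definition dotp (d : nat) (x y : 'rV[R]_d) : R := \sum_(j < d) x 0 j * y 0 j.

Definition enorm (a b : nat) (x : 'M[R]_(a, b)) : R :=
  Num.sqrt (\sum_(i < a) \sum_(j < b) x i j ^+ 2).

(* smallest / largest eigenvalue of a square matrix (the matrices we apply
   this to are symmetric, so all eigenvalues are real) *)
Definition eig_min (n : nat) (M : 'M[R]_n) : R := inf [set a | eigenvalue M a].
Definition eig_max (n : nat) (M : 'M[R]_n) : R := sup [set a | eigenvalue M a].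

Definition cone_of (d n : nat) (v : 'I_n -> 'rV[R]_d) (I : {set 'I_n}) : set 'rV[R]_d :=
  [set x | exists lam : 'I_n -> R,
     (forall i, i \in I -> 0 <= lam i) /\ x = \sum_(i in I) lam i *: v i].

Definition span_of (d n : nat) (v : 'I_n -> 'rV[R]_d) (I : {set 'I_n}) : set 'rV[R]_d :=
  [set x | exists c : 'I_n -> R, x = \sum_(i in I) c i *: v i].

Definition relint_in (d : nat) (L C : set 'rV[R]_d) : set 'rV[R]_d :=
  [set x | C x /\ exists2 e : R, 0 < e &
     forall y, L y -> enorm (y - x) < e -> C y].

Definition lin_indep (d n : nat) (v : 'I_n -> 'rV[R]_d) (I : {set 'I_n}) : Prop :=
  forall c : 'I_n -> R, \sum_(i in I) c i *: v i = 0 -> forall i, i \in I -> c i = 0.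

(* A simplicial fan with ray generators v_1..v_n: its cones are cone(v_I),
   I in [cones]; every cone generated by linearly independent vectors; the
   rays are exactly the cone(v_i); closed under faces (for a simplicial cone
   the faces of cone(v_I) are the cone(v_J), J \subset I); and the
   intersection of two cones is a common face. *)
Definition simplicial_fan (d n : nat) (v : 'I_n -> 'rV[R]_d)
    (cones : set {set 'I_n}) : Prop :=
  [/\ forall i : 'I_n, cones [set i]%SET,
      forall I, cones I -> lin_indep v I,
      forall I J : {set 'I_n}, cones I -> (J \subset I)%SET -> cones J &
      forall I J : {set 'I_n}, cones I -> cones J ->
        cone_of v I `&` cone_of v J = cone_of v (I :&: J)%SET].

Definition conv (d k : nat) (p : 'I_k -> 'rV[R]_d) : set 'rV[R]_d :=
  [set x | exists mu : 'I_k -> R,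
     [/\ forall j, 0 <= mu j, \sum_j mu j = 1 & x = \sum_j mu j *: p j]].

Definition supp_fun (d : nat) (P : set 'rV[R]_d) (u : 'rV[R]_d) : R :=
  sup [set dotp x u | x in P].

Definition face_max (d : nat) (P : set 'rV[R]_d) (w : 'rV[R]_d) : set 'rV[R]_d :=
  [set x | P x /\ dotp x w = supp_fun P w].

Definition normal_cone (d : nat) (P F : set 'rV[R]_d) : set 'rV[R]_d :=
  [set u | forall x, F x -> dotp x u = supp_fun P u].

Definition normal_fan (d : nat) (P : set 'rV[R]_d) : set (set 'rV[R]_d) :=
  [set normal_cone P (face_max P w) | w in [set: 'rV[R]_d]].

Definition polytopal (d n : nat) (v : 'I_n -> 'rV[R]_d) (cones : set {set 'I_n}) : Prop :=
  exists k (p : 'I_k -> 'rV[R]_d), (0 < k)%N /\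
    normal_fan (conv p) = [set cone_of v I | I in cones].

(* deformation cone: support vectors (h_P(v_i))_i of the polytopes P whose
   normal fan is coarsened by the fan (each cone of the fan lies in a cone
   of the normal fan of P) *)
Definition deformation_cone (d n : nat) (v : 'I_n -> 'rV[R]_d)
    (cones : set {set 'I_n}) : set 'cV[R]_n :=
  [set h | exists k (p : 'I_k -> 'rV[R]_d), [/\ (0 < k)%N,
     (forall I, cones I -> exists2 C, normal_fan (conv p) C & cone_of v I `<=` C) &
     h = \col_i supp_fun (conv p) (v i)]].

(* [u] : lam is the coordinate vector of u w.r.t. the generators of the cone
   sigma containing u in its relative interior (zero outside sigma) *)
Definition fan_coords (d n : nat) (v : 'I_n -> 'rV[R]_d) (cones : set {set 'I_n})
    (u : 'rV[R]_d) (lam : 'rV[R]_n) : Prop :=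
  exists2 I, cones I &
    [/\ relint_in (span_of v I) (cone_of v I) u,
        (forall i, i \notin I -> lam 0 i = 0) &
        u = \sum_(i in I) lam 0 i *: v i].

(* A is the matrix A_U: its i-th row is [u^(i)] with u^(i) the i-th row of U *)
Definition is_AU (d n m : nat) (v : 'I_n -> 'rV[R]_d) (cones : set {set 'I_n})
    (U : 'M[R]_(m, d)) (A : 'M[R]_(m, n)) : Prop :=
  forall i, fan_coords v cones (row i U) (row i A).

End Defs.

From HB Require Import structures.
From mathcomp Require Import all_boot all_order all_algebra.
From mathcomp Require Import all_classical all_reals.
From mathcomp Require Import topology normedtype derive matrix_normedtype.
From mathcomp Require Import ring lra.
Import Order.TTheory GRing.Theory Num.Theory numFieldNormedType.Exports.
Local Open Scope ring_scope.
Local Open Scope classical_set_scope.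
Set Implicit Arguments. Unset Strict Implicit. Unset Printing Implicit Defensive.

(* The deformation cone is a convex cone: support functions add under Minkowski
   combinations, and the normal fan of [P] coarsens a cone of the fan exactly
   when [h_P] is linear on it.  Hence [A_U P(Delta)] is convex, and its closest
   point [yhat] to [y] sees [y0] and [y] at an obtuse angle.  As [y - ybar] is
   orthogonal to [yhat - y0], the triangle [y0, yhat, ybar] is obtuse at [yhat],
   which is the first inequality.  The second one compares [|A_U x|^2] with
   [|x|^2] through the Rayleigh quotient of [A_U^T A_U], whose extrema on the
   (compact) unit sphere are attained and are its extreme eigenvalues. *)

Section SupportFunction.
Variables (R : realType) (d : nat).
Implicit Types (u x : 'rV[R]_d).

Lemma dotp_sumZl k (P : pred 'I_k) (mu : 'I_k -> R) (p : 'I_k -> 'rV[R]_d) u :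
  dotp (\sum_(j | P j) mu j *: p j) u = \sum_(j | P j) mu j * dotp (p j) u.
Proof.
rewrite /dotp; under eq_bigr do rewrite summxE mulr_suml.
rewrite exchange_big; apply: eq_bigr => j _; rewrite mulr_sumr.
by apply: eq_bigr => c _; rewrite mxE mulrA.
Qed.

Lemma dotp_sumZr k (P : pred 'I_k) (mu : 'I_k -> R) (p : 'I_k -> 'rV[R]_d) u :
  dotp u (\sum_(j | P j) mu j *: p j) = \sum_(j | P j) mu j * dotp u (p j).
Proof.
rewrite /dotp; under eq_bigr do rewrite summxE mulr_sumr.
rewrite exchange_big; apply: eq_bigr => j _; rewrite mulr_sumr.
by apply: eq_bigr => c _; rewrite mxE mulrCA.
Qed.

Lemma dotpDZl a b x x' u :
  dotp (a *: x + b *: x') u = a * dotp x u + b * dotp x' u.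
Proof.
rewrite /dotp !mulr_sumr -big_split; apply: eq_bigr => c _.
by rewrite !mxE mulrDl !mulrA.
Qed.

Lemma exists_arg_max k (f : 'I_k -> R) : (0 < k)%N ->
  exists j0, forall j, f j <= f j0.
Proof.
move=> k_gt0; have [j _ maxj] := @arg_maxP _ _ _ (Ordinal k_gt0) xpredT f isT.
by exists j => i; apply: maxj.
Qed.

Variables (k : nat) (p : 'I_k -> 'rV[R]_d).

Lemma conv_vertex j : conv p (p j).
Proof.
exists (fun i => (i == j)%:R); split.
- by move=> i; rewrite ler0n.
- by rewrite (bigD1 j) //= eqxx big1 ?addr0 // => i /negbTE ->.
- rewrite (bigD1 j) //= eqxx scale1r big1 ?addr0 // => i /negbTE ->.
  by rewrite scale0r.
Qed.

Lemma conv_dotp_le u s : (forall j, dotp (p j) u <= s) ->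
  forall x, conv p x -> dotp x u <= s.
Proof.
move=> ps x [mu [mu_ge0 mu_sum1 ->]].
rewrite (dotp_sumZl xpredT) -[leRHS]mul1r -mu_sum1 mulr_suml.
by apply: ler_sum => j _; apply: ler_wpM2l.
Qed.

Lemma supp_fun_conv_vertex u j0 : (forall j, dotp (p j) u <= dotp (p j0) u) ->
  supp_fun (conv p) u = dotp (p j0) u.
Proof.
move=> j0_max; have ub : ubound [set dotp x u | x in conv p] (dotp (p j0) u).
  by move=> _ [x px <-]; apply: conv_dotp_le px.
have attained : [set dotp x u | x in conv p] (dotp (p j0) u).
  by exists (p j0); first exact: conv_vertex.
apply: le_anti; rewrite ge_sup //=; last by exists (dotp (p j0) u).
by apply: sup_upper_bound => //; split; [exists (dotp (p j0) u) | exists (dotp (p j0) u)].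
Qed.

Hypothesis k_gt0 : (0 < k)%N.

Lemma dotp_le_supp_fun_conv u x : conv p x -> dotp x u <= supp_fun (conv p) u.
Proof.
have [j0 j0_max] := exists_arg_max (fun j => dotp (p j) u) k_gt0.
by rewrite (supp_fun_conv_vertex j0_max); apply: conv_dotp_le.
Qed.

End SupportFunction.

Section Coarsening.
Variables (R : realType) (d n : nat) (v : 'I_n -> 'rV[R]_d).

Definition linear_on_cone (I : {set 'I_n}) (h : 'rV[R]_d -> R) :=
  forall c : 'I_n -> R, (forall i, i \in I -> 0 <= c i) ->
    h (\sum_(i in I) c i *: v i) = \sum_(i in I) c i * h (v i).

Lemma cone_of_gen (I : {set 'I_n}) i : i \in I -> cone_of v I (v i).
Proof.
move=> iI; exists (fun j => (j == i)%:R); split; first by move=> j _; rewrite ler0n.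
rewrite (bigD1 i) //= eqxx scale1r big1 ?addr0 // => j /andP[_ /negbTE ->].
by rewrite scale0r.
Qed.

Variables (k : nat) (p : 'I_k -> 'rV[R]_d).
Hypothesis k_gt0 : (0 < k)%N.

Lemma normal_fan_coarsens_linear I :
  (exists2 C, normal_fan (conv p) C & cone_of v I `<=` C) ->
  linear_on_cone I (supp_fun (conv p)).
Proof.
move=> [_ [w _ <-] sub_normal].
have [j0 j0_max] := exists_arg_max (fun j => dotp (p j) w) k_gt0.
have face_j0 : face_max (conv p) w (p j0).
  by split; [exact: conv_vertex | rewrite (supp_fun_conv_vertex j0_max)].
have suppE u : cone_of v I u -> supp_fun (conv p) u = dotp (p j0) u.
  by move=> /sub_normal /(_ _ face_j0).
move=> c c_ge0; rewrite suppE; last by exists c.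
by rewrite dotp_sumZr; apply: eq_bigr => i iI; rewrite suppE //; apply: cone_of_gen.
Qed.

(* The face maximizing [w = sum_(i in I) v_i] is supported by every [v_i],
   since the gaps [h(v_i) - <x, v_i>] are nonnegative and sum to zero. *)
Lemma linear_normal_fan_coarsens I :
  linear_on_cone I (supp_fun (conv p)) ->
  exists2 C, normal_fan (conv p) C & cone_of v I `<=` C.
Proof.
move=> lin; set h := supp_fun (conv p); set w := \sum_(i in I) 1 *: v i.
exists (normal_cone (conv p) (face_max (conv p) w)); first by exists w.
move=> _ [lam [lam_ge0 ->]] x [px]; rewrite -/h => xw.
have gap_ge0 i : i \in I -> 0 <= h (v i) - dotp x (v i).
  by move=> _; rewrite subr_ge0; apply: dotp_le_supp_fun_conv.
have gap_sum0 : \sum_(i in I) (h (v i) - dotp x (v i)) = 0.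
  rewrite sumrB; apply/eqP; rewrite subr_eq0; apply/eqP.
  have hw : h w = \sum_(i in I) 1 * h (v i) by apply: lin => _ _; apply: ler01.
  transitivity (\sum_(i in I) 1 * h (v i)); first by under [RHS]eq_bigr do rewrite mul1r.
  by rewrite -hw -xw /w dotp_sumZr; under eq_bigr do rewrite mul1r.
have gap0 := psumr_eq0P gap_ge0 gap_sum0.
rewrite /h lin // dotp_sumZr; apply: eq_bigr => i iI.
by have /eqP := gap0 i iI; rewrite subr_eq0 => /eqP <-.
Qed.

End Coarsening.

Section DeformationCone.
Variables (R : realType) (d n : nat) (v : 'I_n -> 'rV[R]_d) (cones : set {set 'I_n}).

(* The Minkowski combination [a P + b Q] is the hull of the points
   [a p_j + b q_l], indexed by an enumeration of the pairs [(j, l)]. *)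
Lemma supp_fun_conv_minkowski k1 k2 (p : 'I_k1 -> 'rV[R]_d) (q : 'I_k2 -> 'rV[R]_d)
    (a b : R) u : (0 < k1)%N -> (0 < k2)%N -> 0 <= a -> 0 <= b ->
  let r (j : 'I_#|{: 'I_k1 * 'I_k2}|) := a *: p (enum_val j).1 + b *: q (enum_val j).2 in
  supp_fun (conv r) u = a * supp_fun (conv p) u + b * supp_fun (conv q) u.
Proof.
move=> k1_gt0 k2_gt0 a_ge0 b_ge0 r.
have [jp jp_max] := exists_arg_max (fun j => dotp (p j) u) k1_gt0.
have [jq jq_max] := exists_arg_max (fun j => dotp (q j) u) k2_gt0.
rewrite (supp_fun_conv_vertex jp_max) (supp_fun_conv_vertex jq_max).
have -> : a * dotp (p jp) u + b * dotp (q jq) u = dotp (r (enum_rank (jp, jq))) u.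
  by rewrite /r enum_rankK dotpDZl.
apply: supp_fun_conv_vertex => j; rewrite /r enum_rankK !dotpDZl.
by apply: lerD; apply: ler_wpM2l.
Qed.

Lemma deformation_cone_conic h1 h2 (a b : R) : 0 <= a -> 0 <= b ->
  deformation_cone v cones h1 -> deformation_cone v cones h2 ->
  deformation_cone v cones (a *: h1 + b *: h2).
Proof.
move=> a_ge0 b_ge0 [k1 [p [k1_gt0 coars1 ->]]] [k2 [q [k2_gt0 coars2 ->]]].
have suppE := supp_fun_conv_minkowski p q _ k1_gt0 k2_gt0 a_ge0 b_ge0.
set r := fun j => _ in suppE.
have card_gt0 : (0 < #|{: 'I_k1 * 'I_k2}|)%N by rewrite card_prod !card_ord muln_gt0 k1_gt0.
exists _, r; split => //; last by apply/colP => i; rewrite !mxE suppE.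
move=> I coneI; apply: linear_normal_fan_coarsens => // c c_ge0.
rewrite !suppE (normal_fan_coarsens_linear k1_gt0 (coars1 I coneI) c_ge0).
rewrite (normal_fan_coarsens_linear k2_gt0 (coars2 I coneI) c_ge0).
rewrite !mulr_sumr -big_split; apply: eq_bigr => i _.
by rewrite suppE mulrDr !mulrA [a * _]mulrC [b * _]mulrC.
Qed.

End DeformationCone.

Lemma ge0_of_segment (R : realFieldType) (c q : R) :
  (forall t, 0 < t <= 1 -> 0 <= c + t * q) -> 0 <= c.
Proof.
move=> seg; rewrite leNgt; apply/negP => c_lt0.
have den_gt0 : 0 < `|q| - c by rewrite subr_gt0 (lt_le_trans c_lt0).
pose t := - c / (`|q| - c).
have t_gt0 : 0 < t by rewrite divr_gt0 // oppr_gt0.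
have t_le1 : t <= 1 by rewrite ler_pdivrMr // mul1r lerDr.
have tE : t * (`|q| - c) = - c by rewrite divfK // gt_eqF.
have := seg t; rewrite t_gt0 t_le1 => /(_ isT).
have : t * q <= t * `|q| by rewrite ler_pM2l // ler_norm.
nra.
Qed.

Section Projection.
Variables (R : realType) (m : nat).
Implicit Types (x y z : 'cV[R]_m).

Definition cdot x y : R := (x^T *m y) 0 0.

Lemma cdotE x y : cdot x y = \sum_i x i 0 * y i 0.
Proof. by rewrite /cdot mxE; apply: eq_bigr => i _; rewrite mxE. Qed.

Lemma cdot_ge0 x : 0 <= cdot x x.
Proof. by rewrite cdotE; apply: sumr_ge0 => i _; rewrite -expr2 sqr_ge0. Qed.

Lemma enorm_cdot x : enorm x = Num.sqrt (cdot x x).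
Proof.
by rewrite /enorm cdotE; congr Num.sqrt; apply: eq_bigr => i _; rewrite big_ord1 expr2.
Qed.

Lemma cdot_expand x z t :
  cdot (x + t *: z) (x + t *: z) = cdot x x + t * (2 * cdot z x + t * cdot z z).
Proof.
rewrite !cdotE !mulr_sumr -!big_split /= !mulr_sumr -!big_split /=.
by apply: eq_bigr => i _; rewrite !mxE; ring.
Qed.

Variable K : set 'cV[R]_m.
Hypothesis K_convex : forall a b t, K a -> K b -> 0 <= t <= 1 -> K (a + t *: (b - a)).
Variables (y yhat y0 : 'cV[R]_m).
Hypotheses (K_yhat : K yhat) (K_y0 : K y0).
Hypothesis yhat_closest : forall z, K z -> enorm (yhat - y) <= enorm (z - y).

(* Moving from [yhat] towards [y0] cannot decrease the distance to [y]; the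
   first-order term of that distance is the inner product below. *)
Lemma closest_point_obtuse : 0 <= cdot (y0 - yhat) (yhat - y).
Proof.
rewrite -(pmulr_rge0 _ (ltr0Sn R 1)).
apply: (ge0_of_segment (q := cdot (y0 - yhat) (y0 - yhat))) => t /andP[t_gt0 t_le1].
have t01 : 0 <= t <= 1 by rewrite ltW.
have := yhat_closest (K_convex K_yhat K_y0 t01).
rewrite !enorm_cdot ler_sqrt ?cdot_ge0 // (addrAC yhat).
by rewrite cdot_expand lerDl pmulr_rge0.
Qed.

Lemma closest_point_nearer ybar : cdot (yhat - y0) (y - ybar) = 0 ->
  enorm (yhat - y0) <= enorm (ybar - y0).
Proof.
move=> orth; rewrite !enorm_cdot ler_sqrt ?cdot_ge0 //.
have -> : cdot (ybar - y0) (ybar - y0) = cdot (yhat - y0) (yhat - y0)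
    + cdot (ybar - yhat) (ybar - yhat) + 2 * cdot (y0 - yhat) (yhat - y)
    - 2 * cdot (yhat - y0) (y - ybar).
  rewrite !cdotE !mulr_sumr -!big_split /= -sumrB.
  by apply: eq_bigr => i _; rewrite !mxE; ring.
rewrite orth mulr0 subr0 -addrA lerDl addr_ge0 ?cdot_ge0 //.
by rewrite mulr_ge0 // closest_point_obtuse.
Qed.

End Projection.

Section Rayleigh.
Variables (R : realType) (n : nat).
Implicit Types (S : 'M[R]_n) (z w : 'rV[R]_n).

Definition bform S z w : R := (z *m S *m w^T) 0 0.

Lemma bform_sym S z w : S^T = S -> bform S w z = bform S z w.
Proof.
move=> symS; rewrite /bform -[in LHS](trmxK (w *m S *m z^T)) mxE.
by rewrite !trmx_mul trmxK symS mulmxA.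
Qed.

Lemma bform_expand S z w t : S^T = S ->
  bform S (z + t *: w) (z + t *: w) = bform S z z + t * (2 * bform S z w + t * bform S w w).
Proof.
move=> symS; have swap := bform_sym z w symS; rewrite /bform !mxE in swap; rewrite /bform.
rewrite linearD linearZ /= !mulmxDl !mulmxDr -!scalemxAl -!scalemxAr !mxE swap.
ring.
Qed.

Lemma bformZ S a z : bform S (a *: z) (a *: z) = a ^+ 2 * bform S z z.
Proof. by rewrite /bform linearZ /= -scalemxAr -!scalemxAl !mxE mulrA -expr2. Qed.

Lemma bformN S z w : bform (- S) z w = - bform S z w.
Proof. by rewrite /bform mulmxN mulNmx mxE. Qed.

Lemma bformB_scalar S mu z w : bform (S - mu%:M) z w = bform S z w - mu * bform 1 z w.
Proof. by rewrite /bform mulmxBr mul_mx_scalar mulmxBl -scalemxAl !mxE mulmx1. Qed.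

Lemma bform0 S : bform S 0 0 = 0.
Proof. by rewrite /bform !mul0mx mxE. Qed.

Lemma bform1E z : bform 1 z z = \sum_j z 0 j ^+ 2.
Proof. by rewrite /bform mulmx1 mxE; apply: eq_bigr => j _; rewrite mxE expr2. Qed.

Lemma bform1_ge0 z : 0 <= bform 1 z z.
Proof. by rewrite bform1E sumr_ge0 // => j _; rewrite sqr_ge0. Qed.

Lemma bform1_eq0 z : (bform 1 z z == 0) = (z == 0).
Proof.
apply/eqP/eqP => [|->]; last exact: bform0.
rewrite bform1E => /eqP; rewrite psumr_eq0 => [/allP z0|j _]; last exact: sqr_ge0.
by apply/rowP => j; rewrite mxE; apply/eqP; rewrite -sqrf_eq0; apply: implyP (z0 j _) _.
Qed.

Lemma bform1_gt0 z : z != 0 -> 0 < bform 1 z z.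
Proof. by rewrite lt_def bform1_eq0 bform1_ge0 andbT. Qed.

Lemma eigenvector_bform S a z : z *m S = a *: z -> bform S z z = a * bform 1 z z.
Proof. by move=> zS; rewrite /bform zS mulmx1 -scalemxAl mxE. Qed.

(* A vector on which a positive semidefinite form vanishes is in its kernel:
   otherwise [t |-> B(z0 + t w)] would take negative values near [t = 0]. *)
Lemma psd_bform_null S z0 : S^T = S -> (forall z, 0 <= bform S z z) ->
  bform S z0 z0 = 0 -> z0 *m S = 0.
Proof.
move=> symS psd null.
have cross w : bform S z0 w = 0.
  set c := bform S z0 w; set q := bform S w w.
  have quad t : 0 <= t * (2 * c + t * q).
    by have := psd (z0 + t *: w); rewrite bform_expand // null add0r.
  have c_ge0 : 0 <= 2 * c.
    apply: (ge0_of_segment (q := q)) => t /andP[t_gt0 _].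
    by rewrite -(pmulr_rge0 _ t_gt0) quad.
  have c_le0 : 0 <= - (2 * c).
    apply: (ge0_of_segment (q := q)) => t /andP[t_gt0 _].
    rewrite -(pmulr_rge0 _ t_gt0); have := quad (- t).
    by rewrite (_ : - t * _ = t * (- (2 * c) + t * q)) //; ring.
  lra.
apply/rowP => j; have := cross (delta_mx 0 j).
by rewrite /bform trmx_delta -colE mxE => ->; rewrite mxE.
Qed.

Lemma rayleigh_min_eigen S mu z0 : S^T = S ->
  (forall z, mu * bform 1 z z <= bform S z z) ->
  bform S z0 z0 = mu * bform 1 z0 z0 -> z0 *m S = mu *: z0.
Proof.
move=> symS mu_lb z0_min.
have symT : (S - mu%:M)^T = S - mu%:M by rewrite linearB /= tr_scalar_mx symS.
have : z0 *m (S - mu%:M) = 0.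
  apply: psd_bform_null => [//|z|]; rewrite bformB_scalar ?subr_ge0 //.
  by rewrite z0_min subrr.
by rewrite mulmxBr mul_mx_scalar => /eqP; rewrite subr_eq0 => /eqP.
Qed.

Lemma bform_continuous S : continuous (fun z => bform S z z).
Proof.
have sum_cont (F : 'I_n -> 'rV[R]_n -> R) : (forall j, continuous (F j)) ->
    continuous (fun z => \sum_j F j z).
  by move=> F_cont; apply: continuous_big => //; apply: add_continuous.
have coord_cont j : continuous (fun z : 'rV[R]_n => z 0 j) := @coord_continuous R 1 n 0 j.
rewrite (_ : (fun z => _) = fun z => \sum_j (\sum_i z 0 i * S i j) * z 0 j); last first.
  by apply/funext => z; rewrite /bform mxE; apply: eq_bigr => j _; rewrite !mxE.
apply: (sum_cont) => j z; apply: continuousM; last exact: coord_cont.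
by apply: sum_cont => i {}z; apply: continuousM; [apply: coord_cont | apply: cst_continuous].
Qed.

Definition unit_sphere : set 'rV[R]_n := [set z | bform 1 z z = 1].

Lemma unit_sphere_compact : compact unit_sphere.
Proof.
apply: bounded_closed_compact.
  exists 1; split; first exact: num_real.
  move=> M M_gt1 z /= z_unit; rewrite (_ : `|z| = mx_norm z) // mx_normrE.
  apply: le_trans (ltW M_gt1); apply: bigmax_le => // -[i j] _ /=.
  have : z i j ^+ 2 <= 1.
    rewrite -z_unit bform1E (bigD1 j) //= (ord1 i) lerDl.
    by rewrite sumr_ge0 // => k _; rewrite sqr_ge0.
  by move=> z2; rewrite -sqrtr_sqr -sqrtr1 ler_sqrt.
exact: (continuous_closedP _).1 (@bform_continuous 1) _ (@closed_eq R 1).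
Qed.

Lemma rayleigh_min_attained S : (0 < n)%N ->
  exists2 z0, unit_sphere z0 & forall z, unit_sphere z -> bform S z0 z0 <= bform S z z.
Proof.
move=> n_gt0; have sphere_n0 : unit_sphere !=set0.
  exists 'e_(Ordinal n_gt0).
  by rewrite /unit_sphere /= /bform mulmx1 trmx_delta mul_delta_mx mxE !eqxx.
have [z0 z0S z0_min] := compact_EVT_min sphere_n0 unit_sphere_compact
  (continuous_subspaceT (@bform_continuous S)).
by exists z0 => [|z zS]; [move: z0S | apply: z0_min]; rewrite inE.
Qed.

Lemma rayleigh_min_homogeneous S z0 : unit_sphere z0 ->
  (forall z, unit_sphere z -> bform S z0 z0 <= bform S z z) ->
  forall z, bform S z0 z0 * bform 1 z z <= bform S z z.
Proof.
move=> z0S z0_min z; have [->|z_neq0] := eqVneq z 0; first by rewrite !bform0 mulr0.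
have s_gt0 : 0 < Num.sqrt (bform 1 z z) by rewrite sqrtr_gt0 bform1_gt0.
have s2 : Num.sqrt (bform 1 z z) ^+ 2 = bform 1 z z by rewrite sqr_sqrtr // bform1_ge0.
have := z0_min ((Num.sqrt (bform 1 z z))^-1 *: z).
rewrite /unit_sphere /= !bformZ exprVn s2 mulVf ?gt_eqF ?bform1_gt0 // => /(_ erefl).
by rewrite ler_pdivlMl ?bform1_gt0 // mulrC.
Qed.

Lemma eig_min_bform S z : S^T = S -> eig_min S * bform 1 z z <= bform S z z.
Proof.
move=> symS; have [n0|n_gt0] := posnP n.
  have -> : z = 0 by apply/rowP => j; have : (j < 0)%N by rewrite -n0.
  by rewrite !bform0 mulr0.
have [z0 z0S z0_min] := rayleigh_min_attained S n_gt0.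
set mu := bform S z0 z0 in z0_min *.
have mu_lb := rayleigh_min_homogeneous z0S z0_min.
have z0_neq0 : z0 != 0 by rewrite -bform1_eq0 z0S oner_neq0.
have mu_eig : eigenvalue S mu.
  apply/eigenvalueP; exists z0 => //.
  by apply: rayleigh_min_eigen => //; rewrite z0S mulr1.
suff -> : eig_min S = mu by apply: mu_lb.
have mu_lbound : lbound [set a | eigenvalue S a] mu.
  move=> a /eigenvalueP[w wS w_neq0].
  by have := mu_lb w; rewrite (eigenvector_bform wS) ler_pM2r // bform1_gt0.
apply: le_anti; rewrite lb_le_inf ?andbT //; last by exists mu.
by apply: ge_inf => //; exists mu.
Qed.

Lemma eigenvalue_oppmx S a : eigenvalue (- S) (- a) = eigenvalue S a.
Proof.
apply/eigenvalueP/eigenvalueP => -[w wS w_neq0]; exists w => //.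
  by apply: oppr_inj; rewrite -scaleNr -wS mulmxN.
by rewrite mulmxN wS scaleNr.
Qed.

Lemma eig_max_oppmx S : eig_max S = - eig_min (- S).
Proof.
rewrite /eig_max /eig_min /inf opprK; congr sup; apply/seteqP; split => a /=.
  by move=> Sa; exists (- a); rewrite ?opprK // eigenvalue_oppmx.
by move=> [b Sb <-]; rewrite -eigenvalue_oppmx opprK.
Qed.

Lemma bform_eig_max S z : S^T = S -> bform S z z <= eig_max S * bform 1 z z.
Proof.
move=> symS; have symN : (- S)^T = - S by rewrite linearN /= symS.
by rewrite eig_max_oppmx [- _ * _]mulNr lerNr -bformN eig_min_bform.
Qed.

End Rayleigh.

Section GramMatrix.
Variables (R : realType) (m n : nat) (A : 'M[R]_(m, n)).

Lemma gram_sym : (A^T *m A)^T = A^T *m A.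
Proof. by rewrite trmx_mul trmxK. Qed.

Lemma bform1_trmx (x : 'cV[R]_n) : bform 1 x^T x^T = cdot x x.
Proof. by rewrite /bform /cdot mulmx1 trmxK. Qed.

Lemma bform_gram (x : 'cV[R]_n) : bform (A^T *m A) x^T x^T = cdot (A *m x) (A *m x).
Proof. by rewrite /bform /cdot trmxK trmx_mul !mulmxA. Qed.

Lemma sqrt_mul_enorm (a : R) (x : 'cV[R]_n) :
  Num.sqrt a * enorm x = Num.sqrt (a * cdot x x).
Proof. by rewrite enorm_cdot mulrC -sqrtrM ?cdot_ge0 // mulrC. Qed.

Lemma sqrt_eig_min_mul_enorm_le (x : 'cV[R]_n) :
  Num.sqrt (eig_min (A^T *m A)) * enorm x <= enorm (A *m x).
Proof.
rewrite sqrt_mul_enorm enorm_cdot ler_wsqrtr // -bform1_trmx -bform_gram.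
exact: eig_min_bform gram_sym.
Qed.

Lemma enorm_mul_le_sqrt_eig_max (x : 'cV[R]_n) :
  enorm (A *m x) <= Num.sqrt (eig_max (A^T *m A)) * enorm x.
Proof.
rewrite sqrt_mul_enorm enorm_cdot ler_wsqrtr // -bform1_trmx -bform_gram.
exact: bform_eig_max gram_sym.
Qed.

End GramMatrix.

Theorem lemma4p6 (R : realType) (d n m : nat) (v : 'I_n -> 'rV[R]_d)
    (cones : set {set 'I_n}) (U : 'M[R]_(m, d)) (A : 'M[R]_(m, n))
    (h0 : 'cV[R]_n) (y0 y yhat ybar : 'cV[R]_m) (hbar hhat : 'cV[R]_n) :
  simplicial_fan v cones ->
  polytopal v cones ->
  is_AU v cones U A ->
  deformation_cone v cones h0 ->
  y0 = A *m h0 ->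
  (* yhat: the point of A_U P(Delta) closest to y *)
  (exists2 h, deformation_cone v cones h & yhat = A *m h) ->
  (forall h, deformation_cone v cones h -> enorm (yhat - y) <= enorm (A *m h - y)) ->
  (* ybar: orthogonal projection of y onto A_U R^n *)
  (exists h, ybar = A *m h) ->
  (forall h : 'cV[R]_n, (A *m h)^T *m (y - ybar) = 0) ->
  A *m hbar = ybar ->
  A *m hhat = yhat ->
  enorm (yhat - y0) <= enorm (ybar - y0) /\
  Num.sqrt (eig_min (A^T *m A)) * enorm (hhat - h0)
    <= Num.sqrt (eig_max (A^T *m A)) * enorm (hbar - h0).
Proof.
move=> _ _ _ dc_h0 y0E [h dc_h yhatE] yhat_closest _ orth hbarE hhatE.
pose K := [set A *m h | h in deformation_cone v cones].
have K_convex a b t : K a -> K b -> 0 <= t <= 1 -> K (a + t *: (b - a)).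
  move=> [ha dc_ha <-] [hb dc_hb <-] /andP[t_ge0 t_le1].
  exists ((1 - t) *: ha + t *: hb).
    by apply: deformation_cone_conic; rewrite ?subr_ge0.
  by rewrite mulmxDr -!scalemxAr; apply/matrixP => i j; rewrite !mxE; ring.
have y_near : enorm (yhat - y0) <= enorm (ybar - y0).
  apply: (closest_point_nearer K_convex (y := y)); [by exists h | by exists h0 |..].
  - by move=> _ [h' dc_h' <-]; apply: yhat_closest.
  - have /matrixP/(_ 0 0) := orth (hhat - h0).
    by rewrite (mulmxBr A) hhatE -y0E /cdot => ->; rewrite mxE.
split=> //; apply: le_trans (sqrt_eig_min_mul_enorm_le _ _) _.
rewrite mulmxBr hhatE -y0E; apply: le_trans y_near _.
by rewrite -hbarE y0E -mulmxBr enorm_mul_le_sqrt_eig_max.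
Qed.
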